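(* Let $N\in\mathbb N$, $\Sigma_N=\{1,\ldots,N\}^{\mathbb Z}$, and let $\Sigma_A\subset\{1,\ldots,2N\}^{\mathbb Z}$ and $\pi\colon\Sigma_A\to\Sigma_N$ be as in the context. Every Markov measure $\lambda_0$ on $\Sigma_N$ has a unique symmetric extension, i.e. there is exactly one symmetric Markov measure $\lambda$ on $\Sigma_A$ with $\pi_*\lambda=\lambda_0$.
   Context: Given $C^1$-diffeomorphisms onto their images $f_1,\ldots,f_N$ of $[0,1]$, let $\mathcal I_P$ / $\mathcal I_R$ be the indices of orientation preserving / reversing $f_i$. $A=(a_{ij})_{i,j=1}^{2N}$ with $a_{ij}=1$ if ($i\in\mathcal I_P$, $j\le N$), or ($i\in\mathcal I_R$, $j>N$), or ($i-N\in\mathcal I_P$, $j>N$), or ($i-N\in\mathcal I_R$, $j\le N$), else $0$; $\Sigma_A$ the set of $\omega\in\{1,\ldots,2N\}^{\mathbb Z}$ with $a_{\omega_n\omega_{n+1}}=1$ for all $n$; $\pi(\omega)_n=\overline{\omega_n}$ with $\overline i=i$ for $i\le N$, $\overline i=i-N$ otherwise. A Markov measure on $\Sigma_A$ is given by a probability vector $(p_1,\ldots,p_{2N})$ and a stochastic matrix $(P_{ij})$ compatible with $A$, via $\lambda(\{\eta\colon\eta_k=\omega_k,\ m\le k\le n\})=p_{\omega_m}P_{\omega_m\omega_{m+1}}\cdots P_{\omega_{n-1}\omega_n}$. It is symmetric if $p_i=p_{i+N}$, $P_{ij}=P_{(i+N)(j+N)}$ and $P_{i(j+N)}=P_{(i+N)j}$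 for all $i,j=1,\ldots,N$. *)

From HB Require Import structures.
From mathcomp Require Import all_boot all_order all_algebra.
From mathcomp Require Import all_classical all_reals all_analysis.
Set Implicit Arguments. Unset Strict Implicit. Unset Printing Implicit Defensive.
Import Order.TTheory GRing.Theory Num.Theory.
Local Open Scope classical_set_scope.
Local Open Scope ring_scope.

(* 'I_n.+1 is pointed by 0 (needed by the generated-sigma-algebra construction) *)
HB.instance Definition _ (n : nat) := isPointed.Build 'I_n.+1 ord0.

Definition coord_sets (S : Type) : set (set (int -> S)) :=
  fun A => exists (k : int) (a : S), A = [set w | w k = a].

Definition Shift (S : Type) := g_sigma_algebraType (@coord_sets S).

Definition cylinder (S : Type) (w : int -> S) (m : int) (len : nat) : set (int -> S) :=
  [set eta | forall t : nat, (t <= len)%N -> eta (m + t%:Z) = w (m + t%:Z)].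

Section Markov.
Variables (R : realType) (k : nat).

Definition prob_vector (p : 'I_k -> R) : Prop :=
  (forall i, 0 <= p i) /\ \sum_(i < k) p i = 1.

Definition stochastic (P : 'I_k -> 'I_k -> R) : Prop :=
  (forall i j, 0 <= P i j) /\ (forall i, \sum_(j < k) P i j = 1).

Definition compatible (adm : 'I_k -> 'I_k -> bool) (P : 'I_k -> 'I_k -> R) : Prop :=
  forall i j, ~~ adm i j -> P i j = 0.

Definition markov_weight (p : 'I_k -> R) (P : 'I_k -> 'I_k -> R) (w : int -> 'I_k)
    (m : int) (len : nat) : R :=
  p (w m) * \prod_(t < len) P (w (m + t%:Z)) (w (m + t%:Z + 1)).

Definition markov_with (adm : 'I_k -> 'I_k -> bool) (p : 'I_k -> R)
    (P : 'I_k -> 'I_k -> R) (mu : set (int -> 'I_k) -> \bar R) : Prop :=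
  [/\ prob_vector p, stochastic P, compatible adm P &
      forall (w : int -> 'I_k) (m : int) (len : nat),
        mu (cylinder w m len) = (markov_weight p P w m len)%:E].
End Markov.

Section Lift.
Variable N : nat.

(* bar i = i for i in the first copy, i - N for i in the second copy (0-indexed) *)
Definition bar (i : 'I_(N + N)) : 'I_N :=
  match fintype.split i with inl j => j | inr j => j end.

(* orient i = true iff f_i is orientation preserving (i in I_P) *)
Definition adjA (orient : 'I_N -> bool) (i j : 'I_(N + N)) : bool :=
  match fintype.split i with
  | inl i' => if orient i' then (j < N)%N else (N <= j)%N
  | inr i' => if orient i' then (N <= j)%N else (j < N)%N
  end.

Definition piA (w : int -> 'I_(N + N)) : int -> 'I_N := fun n => bar (w n).

Definition symmetric_params (R : realType) (p : 'I_(N + N) -> R)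
    (P : 'I_(N + N) -> 'I_(N + N) -> R) : Prop :=
  forall i j : 'I_N,
    [/\ p (lshift N i) = p (rshift N i),
        P (lshift N i) (lshift N j) = P (rshift N i) (rshift N j) &
        P (lshift N i) (rshift N j) = P (rshift N i) (lshift N j)].
End Lift.

Definition markov_full (R : realType) (N : nat) (mu : set (int -> 'I_N) -> \bar R) : Prop :=
  exists (q : 'I_N -> R) (Q : 'I_N -> 'I_N -> R), markov_with (fun _ _ => true) q Q mu.

Definition sym_markov_A (R : realType) (N : nat) (orient : 'I_N -> bool)
    (mu : set (int -> 'I_(N + N)) -> \bar R) : Prop :=
  exists (p : 'I_(N + N) -> R) (P : 'I_(N + N) -> 'I_(N + N) -> R),
    markov_with (adjA orient) p P mu /\ symmetric_params p P.

(* pi_* lambda = lambda0 (on measurable sets); here N = n.+1 (the measurable-space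
   construction needs a nonempty alphabet) *)
Definition push_eq (R : realType) (n : nat)
    (lam : set (Shift 'I_(n.+1 + n.+1)) -> \bar R) (lam0 : set (Shift 'I_n.+1) -> \bar R) : Prop :=
  forall B : set (Shift 'I_n.+1), measurable B -> lam (@piA n.+1 @^-1` B) = lam0 B.

(* Over every om in Sigma_N lie exactly two A-admissible sequences, [lift false om]
   and [lift true om]: the copy of the letter at time 0 is free, and the copy switches
   exactly after each orientation reversing letter.  The average of the two pushforwards
   of lam0 is a symmetric Markov measure projecting to lam0.  Conversely, for any such
   measure lam the non-admissible sequences are null, and the preimage under pi of an
   admissible cylinder [w] is, up to this null set, the disjoint union of [w] and of its
   flip, which have the same mass by symmetry; hence lam [w] = lam0 (pi [w]) / 2.
   Cylinders centred at 0 form a pi-system generating the sigma-algebra, so lam is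
   unique. *)

From HB Require Import structures.
From mathcomp Require Import all_boot all_order all_algebra.
From mathcomp Require Import all_classical all_reals all_analysis.
From mathcomp Require Import zify.
Set Implicit Arguments. Unset Strict Implicit. Unset Printing Implicit Defensive.
Import Order.TTheory GRing.Theory Num.Theory.
Local Open Scope classical_set_scope.
Local Open Scope ring_scope.

Lemma measurable_fun_addb d (T : measurableType d) (f g : T -> bool) :
  measurable_fun [set: T] f -> measurable_fun [set: T] g ->
  measurable_fun [set: T] (fun x => f x (+) g x).
Proof.
move=> mf mg; rewrite (_ : (fun x => _) = fun x => if f x then ~~ g x else g x).
  by apply: measurable_fun_ifT => //; exact: measurable_neg.
by apply/funext => x; case: (f x).
Qed.

Section ShiftMeasurability.
Variable k : nat.
Local Notation Sh := (Shift 'I_k.+1).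

Lemma measurable_coord (j : int) (P : set 'I_k.+1) :
  measurable [set eta : Sh | P (eta j)].
Proof.
rewrite (_ : [set eta | P (eta j)] = \bigcup_(a in P) [set eta | eta j = a]).
  apply: fin_bigcup_measurable => [|a _]; first exact: finite_finset.
  by apply: sub_sigma_algebra; exists j, a.
by apply/seteqP; split => [eta Peta | eta [a Pa /= ->]] //; exists (eta j).
Qed.

Lemma measurable_fun_coord (j : int) (f : 'I_k.+1 -> bool) :
  measurable_fun [set: Sh] (fun eta => f (eta j)).
Proof.
apply: (measurable_fun_bool true); rewrite setTI.
exact: (measurable_coord j (fun a => f a = true)).
Qed.

Lemma measurable_cylinder (w : int -> 'I_k.+1) (m : int) (len : nat) :
  measurable (cylinder w m len : set Sh).
Proof.
rewrite (_ : cylinder w m len = \bigcap_(t in [set t | (t <= len)%N])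
                                 [set eta | eta (m + t%:Z) = w (m + t%:Z)]).
  by apply: bigcap_measurableType => t _; exact: (measurable_coord _ (eq^~ _)).
by apply/seteqP; split => eta /= H t; apply: H.
Qed.

End ShiftMeasurability.

(* Xor of f over [0, x) for x >= 0 and over [x, 0) for x < 0 (Negz i = - i.+1). *)
Definition parity (f : int -> bool) (x : int) : bool :=
  match x with
  | Posz m => \big[addb/false]_(i < m) f i%:Z
  | Negz m => \big[addb/false]_(i < m.+1) f (Negz i)
  end.

Lemma parityS (f : int -> bool) (x : int) : parity f (x + 1) = parity f x (+) f x.
Proof.
case: x => [m|[|m]].
- by rewrite (_ : Posz m + 1 = m.+1%:Z) /= ?big_ord_recr //; lia.
- rewrite (_ : Negz 0 + 1 = 0); last by rewrite NegzE; lia.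
  by rewrite /= big_ord0 big_ord1 addbb.
- rewrite (_ : Negz m.+1 + 1 = Negz m); last by rewrite !NegzE; lia.
  by rewrite /= [in RHS]big_ord_recr /= addbK.
Qed.

Lemma measurable_fun_parity d (T : measurableType d) (g : T -> int -> bool) :
  (forall y, measurable_fun [set: T] (fun x => g x y)) ->
  forall y, measurable_fun [set: T] (fun x => parity (g x) y).
Proof.
move=> mg; elim/int_rect => [|m IH|m IH].
- rewrite (_ : (fun x => _) = cst false); first exact: measurable_cst.
  by apply/funext => x; rewrite /= big_ord0.
- rewrite (_ : m.+1%:Z = m%:Z + 1); last lia.
  under eq_fun do rewrite parityS.
  exact: measurable_fun_addb.
- have parityN x : parity (g x) (- m.+1%:Z) = parity (g x) (- m%:Z) (+) g x (- m.+1%:Z).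
    by rewrite -[in - m%:Z](_ : - m.+1%:Z + 1 = - m%:Z) ?parityS ?addbK //; lia.
  under eq_fun do rewrite parityN.
  exact: measurable_fun_addb.
Qed.

Definition adm_window (k : nat) (adm : 'I_k -> 'I_k -> bool) (w : int -> 'I_k)
    (m : int) (len : nat) : Prop :=
  forall t, (t < len)%N -> adm (w (m + t%:Z)) (w (m + t%:Z + 1)).

Lemma cylinder_adm_window (k : nat) (adm : 'I_k -> 'I_k -> bool) (w u : int -> 'I_k)
    (m : int) (len : nat) :
  cylinder w m len u -> adm_window adm u m len -> adm_window adm w m len.
Proof.
move=> wu au t ht; have := au t ht.
rewrite (_ : m + t%:Z + 1 = m + t.+1%:Z); last lia.
by rewrite !wu ?(ltnW ht).
Qed.

Lemma markov_weight_eq0 (R : realType) (k : nat) (adm : 'I_k -> 'I_k -> bool)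
    (p : 'I_k -> R) (P : 'I_k -> 'I_k -> R) (w : int -> 'I_k) (m : int) (len : nat) :
  compatible adm P -> ~ adm_window adm w m len -> markov_weight p P w m len = 0.
Proof.
move=> Pc /existsNP [t /not_implyP [ht /negP nadm]].
by rewrite /markov_weight (bigD1 (Ordinal ht)) //= Pc // mul0r mulr0.
Qed.

Section Lift.
Variables (n : nat) (orient : 'I_n.+1 -> bool).
Local Notation N := n.+1.

Definition side (a : 'I_(N + N)) : bool := (N <= a)%N.

Definition sided (s : bool) (x : 'I_N) : 'I_(N + N) :=
  if s then rshift N x else lshift N x.

Lemma bar_sided s x : bar (sided s x) = x.
Proof.
rewrite /bar /sided; case: s.
  by have := unsplitK (inr x : 'I_N + 'I_N) => /= ->.
by have := unsplitK (inl x : 'I_N + 'I_N) => /= ->.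
Qed.

Lemma side_sided s x : side (sided s x) = s.
Proof. by rewrite /side /sided; case: s => /=; [rewrite leq_addr | rewrite leqNgt ltn_ord]. Qed.

Lemma sided_side_bar a : sided (side a) (bar a) = a.
Proof.
rewrite /side /bar /sided; case: splitP => [j|j] /= Ea; apply: val_inj; rewrite /= Ea.
  by rewrite leqNgt ltn_ord.
by rewrite leq_addr.
Qed.

Lemma sidedP s x a : sided s x = a <-> s = side a /\ x = bar a.
Proof.
split => [<-|[-> ->]]; last exact: sided_side_bar.
by rewrite side_sided bar_sided.
Qed.

Lemma sum_sided (V : nmodType) (F : 'I_(N + N) -> V) :
  \sum_(a < N + N) F a = \sum_(x < N) F (sided false x) + \sum_(x < N) F (sided true x).
Proof. exact: big_split_ord. Qed.

Lemma adjA_side a b : adjA orient a b = (side b == side a (+) ~~ orient (bar a)).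
Proof.
rewrite /adjA /side /bar; case: (splitP a) => [j|j] /= Ea; rewrite Ea.
  rewrite (leqNgt N j) ltn_ord /=.
  by case: (orient j); rewrite /= ?ltnNge; case: (N <= b)%N.
rewrite leq_addr /=.
by case: (orient j); rewrite /= ?ltnNge; case: (N <= b)%N.
Qed.

Definition flip (a : 'I_(N + N)) : 'I_(N + N) := sided (~~ side a) (bar a).

Lemma adjA_flip a b : adjA orient (flip a) (flip b) = adjA orient a b.
Proof.
rewrite !adjA_side /flip !side_sided !bar_sided.
by case: (side a); case: (side b); case: (orient _).
Qed.

Lemma adm_window_cylinder (u v : int -> 'I_(N + N)) (m : int) (len : nat) :
  adm_window (adjA orient) u m len -> adm_window (adjA orient) v m len ->
  cylinder (piA v) m len (piA u) -> side (u m) = side (v m) -> cylinder v m len u.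
Proof.
move=> au av uv uv0.
have side_uv t : (t <= len)%N -> side (u (m + t%:Z)) = side (v (m + t%:Z)).
  elim: t => [|t IH] ht; first by rewrite addr0.
  rewrite (_ : m + t.+1%:Z = m + t%:Z + 1); last lia.
  move: (au t ht) (av t ht); rewrite !adjA_side => /eqP -> /eqP ->.
  rewrite IH; last exact: ltnW.
  by have := uv t (ltnW ht); rewrite /piA => ->.
move=> t ht; have := uv t ht; rewrite /piA => bar_uv.
by rewrite -[LHS]sided_side_bar -[RHS]sided_side_bar side_uv // bar_uv.
Qed.

Definition lift (c : bool) (om : Shift 'I_N) : Shift 'I_(N + N) :=
  fun x => sided (c (+) parity (fun y => ~~ orient (om y)) x) (om x).

Lemma piA_lift c om : piA (lift c om) = om.
Proof. by apply/funext => x; rewrite /piA /lift bar_sided. Qed.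

Lemma adjA_lift c om x : adjA orient (lift c om x) (lift c om (x + 1)).
Proof. by rewrite adjA_side /lift !side_sided bar_sided parityS addbA. Qed.

Lemma measurable_fun_reversal_parity x :
  measurable_fun [set: Shift 'I_N] (fun om => parity (fun y => ~~ orient (om y)) x).
Proof.
apply: measurable_fun_parity => y.
exact: (measurable_fun_coord y (fun a => ~~ orient a)).
Qed.

Lemma measurable_lift c : measurable_fun [set: Shift 'I_N] (lift c).
Proof.
apply: (@measurability _ _ (Shift 'I_N) (Shift 'I_(N + N)) setT (lift c)
  (@coord_sets _)) => //.
move=> _ [_ [j [a ->]] <-]; rewrite setTI.
rewrite (_ : _ @^-1` _ =
    [set om | c (+) parity (fun y => ~~ orient (om y)) j = side (a : 'I_(N + N))]
    `&` [set om | om j = bar (a : 'I_(N + N))]).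
  apply: measurableI; last exact: (measurable_coord _ (eq^~ _)).
  rewrite -[X in measurable X]setTI.
  have mpar := measurable_fun_addb (measurable_cst c) (measurable_fun_reversal_parity j).
  exact: (mpar measurableT [set side (a : 'I_(N + N))]).
by apply/seteqP; split => om /=; rewrite /lift sidedP.
Qed.

Lemma measurable_piA :
  measurable_fun [set: Shift 'I_(N + N)] (@piA N : _ -> Shift 'I_N).
Proof.
apply: (@measurability _ _ (Shift 'I_(N + N)) (Shift 'I_N) setT (@piA N)
  (@coord_sets _)) => //.
move=> _ [_ [j [a ->]] <-]; rewrite setTI.
exact: (measurable_coord j (fun x : 'I_(N + N) => bar x = a)).
Qed.

End Lift.

Lemma measure_negligible_sandwich d (T : measurableType d) (R : realType)
    (mu : {measure set T -> \bar R}) (A B M : set T) :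
  measurable A -> measurable B -> mu.-negligible M ->
  A `<=` B -> B `<=` A `|` M -> mu B = mu A.
Proof.
move=> mA mB [M' [mM' M'0 MM']] AB BAM; apply/eqP; rewrite eq_le; apply/andP; split.
  rewrite -(measureU0 mA mM' M'0); apply: le_measure; rewrite ?inE //.
    exact: measurableU.
  by move=> x /BAM [Ax|Mx]; [left | right; exact: MM'].
by apply: le_measure; rewrite ?inE.
Qed.

Section MarkovNull.
Variables (R : realType) (k : nat) (adm : 'I_k.+1 -> 'I_k.+1 -> bool).
Variables (p : 'I_k.+1 -> R) (P : 'I_k.+1 -> 'I_k.+1 -> R).
Variable mu : {measure set Shift 'I_k.+1 -> \bar R}.
Hypothesis mu_markov : markov_with adm p P mu.

Lemma markov_cylinder_eq0 w m len :
  ~ adm_window adm w m len -> mu (cylinder w m len) = 0%E.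
Proof. by case: mu_markov => _ _ Pc -> /(markov_weight_eq0 p Pc) ->. Qed.

Lemma markov_bad_step_negligible (x : int) :
  mu.-negligible [set eta | ~~ adm (eta x) (eta (x + 1))].
Proof.
have x1 : (x + 1 == x) = false by apply/eqP; lia.
pose two (i j : nat) (y : int) : 'I_k.+1 := if y == x then inord i else inord j.
apply: (@negligibleS _ _ _ mu (\bigcup_i \bigcup_j
  if adm (inord i) (inord j) then set0 else cylinder (two i j) x 1)).
  move=> eta /= nadm; exists (eta x) => //; exists (eta (x + 1)) => //=.
  rewrite !inord_val (negbTE nadm) => -[|[|//]] _; rewrite /two.
    by rewrite addr0 eqxx inord_val.
  by rewrite x1 inord_val.
apply: negligible_bigcup => i; apply: negligible_bigcup => j.
case: ifPn => [_|nadm]; first exact: negligible_set0.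
apply/negligibleP; first exact: measurable_cylinder.
apply: markov_cylinder_eq0 => /(_ 0%N isT).
by rewrite addr0 /two eqxx x1 (negbTE nadm).
Qed.

Lemma markov_not_adm_negligible m len :
  mu.-negligible [set eta | ~ adm_window adm eta m len].
Proof.
apply: (@negligibleS _ _ _ mu
  (\bigcup_t [set eta | ~~ adm (eta (m + t%:Z)) (eta (m + t%:Z + 1))])).
  by move=> eta /existsNP [t /not_implyP [_ /negP nadm]]; exists t.
by apply: negligible_bigcup => t; exact: markov_bad_step_negligible.
Qed.

End MarkovNull.

Lemma mnormalize_addE d (T : measurableType d) (R : realType) (P1 P2 P : probability T R)
    (A : set T) :
  mnormalize (measure_add P1 P2) P A = ((P1 A + P2 A) * (2^-1)%:E)%E.
Proof.
rewrite /mnormalize /= /msum !big_ord_recr !big_ord0 /= !add0e !probability_setT -EFinD.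
rewrite (_ : 1 + 1 = 2%:R :> R) // ifF; last by rewrite orbF eqe pnatr_eq0.
by rewrite /= !big_ord_recr big_ord0 /= add0e.
Qed.

Section SymmetricExtension.
Variables (R : realType) (n : nat) (orient : 'I_n.+1 -> bool).
Variable lam0 : probability (Shift 'I_n.+1) R.
Local Notation N := n.+1.

HB.instance Definition _ (c : bool) := isMeasurableFun.Build _ _
  (Shift 'I_N) (Shift 'I_(N + N)) (lift orient c) (measurable_lift orient c).

(* mnormalize divides by the total mass 2. *)
Definition symmetric_extension :=
  mnormalize (measure_add (distribution lam0 (lift orient false))
                          (distribution lam0 (lift orient true)))
             (distribution lam0 (lift orient false)).

Lemma symmetric_extensionE A : symmetric_extension A =
  ((lam0 (lift orient false @^-1` A) + lam0 (lift orient true @^-1` A)) * (2^-1)%:E)%E.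
Proof. exact: mnormalize_addE. Qed.

Lemma symmetric_extension_push : push_eq symmetric_extension lam0.
Proof.
move=> B mB; rewrite symmetric_extensionE.
have liftK c : lift orient c @^-1` (@piA N @^-1` B) = B.
  by apply/seteqP; split => om /=; rewrite piA_lift.
rewrite !liftK -(fineK (fin_num_measure lam0 B mB)) -EFinD -EFinM.
by rewrite mulrDl -splitr.
Qed.

Lemma preimage_lift_cylinder (c : bool) (w : int -> 'I_(N + N)) (m : int) (len : nat) :
  adm_window (adjA orient) w m len ->
  lift orient c @^-1` cylinder w m len =
  cylinder (piA w) m len `&`
  [set om | c (+) parity (fun y => ~~ orient (om y)) m = side (w m)].
Proof.
move=> aw; apply/seteqP; split => om /=.
  move=> lw; split; first by move=> t ht; rewrite /piA -(lw t ht) /lift bar_sided.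
  by have := lw 0%N isT; rewrite addr0 => <-; rewrite /lift side_sided.
move=> [om_w side0].
apply: (@adm_window_cylinder n orient (lift orient c om) w) => //.
- by move=> t _; exact: adjA_lift.
- by rewrite piA_lift.
- by rewrite /lift side_sided.
Qed.

Variables (q : 'I_N -> R) (Q : 'I_N -> 'I_N -> R).
Hypothesis lam0_markov : markov_with (fun _ _ => true) q Q lam0.

Definition lift_init (a : 'I_(N + N)) : R := q (bar a) / 2.
Definition lift_trans (a b : 'I_(N + N)) : R :=
  if adjA orient a b then Q (bar a) (bar b) else 0.

Lemma symmetric_extension_cylinder (w : int -> 'I_(N + N)) (m : int) (len : nat) :
  symmetric_extension (cylinder w m len) =
  (markov_weight lift_init lift_trans w m len)%:E.
Proof.
rewrite symmetric_extensionE.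
have [aw|naw] := pselect (adm_window (adjA orient) w m len); last first.
  have lift0 c : lift orient c @^-1` cylinder w m len = set0.
    apply/seteqP; split => // om lw; apply: naw; apply: cylinder_adm_window lw _.
    by move=> t _; exact: adjA_lift.
  rewrite !lift0 measure0 adde0 mul0e (@markov_weight_eq0 _ _ (adjA orient)) //.
  by move=> a b /negbTE; rewrite /lift_trans => ->.
rewrite !preimage_lift_cylinder //=.
set E := [set om | parity _ m = side (w m)].
have -> : [set om | ~~ parity (fun y => ~~ orient (om y)) m = side (w m)] = ~` E.
  by apply/seteqP; split => om; rewrite /E /=; case: parity; case: (side (w m)).
have mE : measurable (E : set (Shift 'I_N)).
  rewrite -[E]setTI.
  exact: (measurable_fun_reversal_parity orient m) measurableT [set side (w m)] _.
rewrite -measureU; first last.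
- by rewrite setIACA setICr setI0.
- by apply: measurableI; [exact: measurable_cylinder | exact: measurableC].
- by apply: measurableI; first exact: measurable_cylinder.
rewrite -setIUr setUCr setIT.
transitivity ((markov_weight q Q (piA w) m len)%:E * (2^-1)%:E)%E.
  by congr (_ * _)%E; case: lam0_markov => _ _ _; apply.
rewrite -EFinM /markov_weight /lift_init mulrAC; congr (_ * _)%:E.
by apply: eq_bigr => t _; rewrite /lift_trans aw.
Qed.

Lemma symmetric_extension_markov : sym_markov_A orient symmetric_extension.
Proof.
case: lam0_markov => [[q_ge0 q_sum1] [Q_ge0 Q_sum1] _ _].
exists lift_init, lift_trans; split; last first.
  move=> i j; rewrite /lift_init /lift_trans !adjA_side.
  rewrite -[lshift N i]/(sided false i) -[rshift N i]/(sided true i).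
  rewrite -[lshift N j]/(sided false j) -[rshift N j]/(sided true j).
  by rewrite !side_sided !bar_sided; split => //; case: (orient i).
split.
- split; first by move=> a; rewrite /lift_init divr_ge0.
  rewrite sum_sided /lift_init.
  under eq_bigr do rewrite bar_sided.
  under [X in _ + X]eq_bigr do rewrite bar_sided.
  by rewrite -!mulr_suml q_sum1 -splitr.
- split; first by move=> a b; rewrite /lift_trans; case: ifP.
  move=> a; rewrite sum_sided /lift_trans.
  under eq_bigr do rewrite adjA_side side_sided bar_sided.
  under [X in _ + X]eq_bigr do rewrite adjA_side side_sided bar_sided.
  case: (side a (+) ~~ orient (bar a)) => /=.
    by rewrite big1 ?add0r ?Q_sum1.
  by rewrite [X in _ + X]big1 ?addr0 ?Q_sum1.
- by move=> a b /negbTE; rewrite /lift_trans => ->.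
- exact: symmetric_extension_cylinder.
Qed.

End SymmetricExtension.

Section SymmetricUniqueness.
Variables (R : realType) (n : nat) (orient : 'I_n.+1 -> bool).
Variable lam0 : probability (Shift 'I_n.+1) R.
Local Notation N := n.+1.

Lemma markov_weight_flip (p : 'I_(N + N) -> R) (P : 'I_(N + N) -> 'I_(N + N) -> R)
    (w : int -> 'I_(N + N)) (m : int) (len : nat) :
  symmetric_params p P ->
  markov_weight p P (@flip n \o w) m len = markov_weight p P w m len.
Proof.
move=> sym.
have p_swap s x : p (sided (~~ s) x) = p (sided s x).
  by have [e _ _] := sym x x; case: s; rewrite /sided /= e.
have P_swap s s' x y : P (sided (~~ s) x) (sided (~~ s') y) = P (sided s x) (sided s' y).
  by have [_ e1 e2] := sym x y; case: s; case: s'; rewrite /sided /= ?e1 ?e2.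
rewrite /markov_weight /= /flip p_swap sided_side_bar; congr (_ * _).
by apply: eq_bigr => t _; rewrite P_swap !sided_side_bar.
Qed.

Lemma sym_markov_cylinder_twice (lam : probability (Shift 'I_(N + N)) R)
    (w : int -> 'I_(N + N)) (m : int) (len : nat) :
  sym_markov_A orient lam -> push_eq lam lam0 -> adm_window (adjA orient) w m len ->
  (lam (cylinder w m len) + lam (cylinder w m len) = lam0 (cylinder (piA w) m len))%E.
Proof.
move=> [p [P [lam_markov sym]]] lam_push aw.
pose v := @flip n \o w.
have av : adm_window (adjA orient) v m len.
  by move=> t ht; rewrite /v /= adjA_flip; exact: aw.
have piA_v : piA v = piA w by apply/funext => x; rewrite /piA /v /= /flip bar_sided.
have side_v : side (v m) = ~~ side (w m) by rewrite /v /= /flip side_sided.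
have lam_v : lam (cylinder v m len) = lam (cylinder w m len).
  by case: lam_markov => _ _ _ mk; rewrite !mk markov_weight_flip.
have cylinder_piA (u eta : int -> 'I_(N + N)) :
    cylinder u m len eta -> cylinder (piA u) m len (piA eta).
  by move=> e t ht; rewrite /piA e.
rewrite -{2}lam_v -measureU; first last.
- apply/seteqP; split => // eta [/(_ 0%N isT) + /(_ 0%N isT)].
  rewrite addr0 => -> /(congr1 (@side n)).
  by rewrite side_v; case: side.
- exact: measurable_cylinder.
- exact: measurable_cylinder.
rewrite -lam_push; last exact: measurable_cylinder.
apply/esym/(measure_negligible_sandwich _ _ (markov_not_adm_negligible lam_markov m len)).
- by apply: measurableU; exact: measurable_cylinder.
- rewrite -[X in measurable X]setTI; apply: measurable_piA => //; exact: measurable_cylinder.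
- by move=> eta [] /cylinder_piA //; rewrite piA_v.
move=> eta eta_w; have [a_eta|] := pselect (adm_window (adjA orient) eta m len); last by right.
left; have [e|ne] := boolP (side (eta m) == side (w m)); [left|right].
  exact: (adm_window_cylinder a_eta aw eta_w (eqP e)).
apply: (adm_window_cylinder a_eta av); first by rewrite piA_v.
by rewrite side_v; move: ne; case: (side (eta m)); case: (side (w m)).
Qed.

Lemma sym_markov_cylinder_unique (lam lam' : probability (Shift 'I_(N + N)) R)
    (w : int -> 'I_(N + N)) (m : int) (len : nat) :
  sym_markov_A orient lam -> push_eq lam lam0 ->
  sym_markov_A orient lam' -> push_eq lam' lam0 ->
  lam (cylinder w m len) = lam' (cylinder w m len).
Proof.
move=> lam_sym lam_push lam'_sym lam'_push.
have [aw|naw] := pselect (adm_window (adjA orient) w m len); last first.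
  case: lam_sym lam'_sym => [p [P [mk _]]] [p' [P' [mk' _]]].
  by rewrite (markov_cylinder_eq0 mk naw) (markov_cylinder_eq0 mk' naw).
have := sym_markov_cylinder_twice lam_sym lam_push aw.
rewrite -(sym_markov_cylinder_twice lam'_sym lam'_push aw).
rewrite -[lam _](fineK (fin_num_measure _ _ (measurable_cylinder _ _ _))).
rewrite -[lam' _](fineK (fin_num_measure _ _ (measurable_cylinder _ _ _))).
by rewrite -!EFinD => -[] /eqP; rewrite -!mulr2n eqr_pMn2r // => /eqP ->.
Qed.

End SymmetricUniqueness.

Section CenteredCylinders.
Variable k : nat.

Definition centered_cylinders : set (set (Shift 'I_k.+1)) :=
  [set A | A = set0 \/ A = setT \/
           exists (w : int -> 'I_k.+1) (L : nat), A = cylinder w (- L%:Z) (L + L)].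

(* Centred windows are nested, so two centred cylinders are disjoint or nested. *)
Lemma centered_cylindersI (w1 w2 : int -> 'I_k.+1) (L1 L2 : nat) : (L1 <= L2)%N ->
  centered_cylinders
    (cylinder w1 (- L1%:Z) (L1 + L1) `&` cylinder w2 (- L2%:Z) (L2 + L2)).
Proof.
move=> L12.
have in2 eta t : cylinder w2 (- L2%:Z) (L2 + L2) eta -> (t <= L1 + L1)%N ->
    eta (- L1%:Z + t%:Z) = w2 (- L1%:Z + t%:Z).
  move=> e2 ht; rewrite (_ : - L1%:Z + t%:Z = - L2%:Z + (t + (L2 - L1))%N%:Z); last lia.
  by apply: e2; lia.
have [agree|disagree] := pselect (forall t, (t <= L1 + L1)%N ->
  w1 (- L1%:Z + t%:Z) = w2 (- L1%:Z + t%:Z)).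
  right; right; exists w2, L2; rewrite setIidr // => eta e2 t ht.
  by rewrite agree // in2.
left; apply/seteqP; split => // eta [e1 e2]; apply: disagree => t ht.
by rewrite -e1 // in2.
Qed.

Lemma setI_closed_centered_cylinders : setI_closed centered_cylinders.
Proof.
have set0_centered : centered_cylinders set0 by left.
move=> A B [->|[->|[w1 [L1 ->]]]] [->|[->|[w2 [L2 ->]]]];
  rewrite ?set0I ?setI0 ?setTI ?setIT //;
  try by [right; left | right; right; eexists; eexists].
have [L12|/ltnW L21] := leqP L1 L2; first exact: centered_cylindersI.
by rewrite setIC; exact: centered_cylindersI.
Qed.

Lemma coord_centered_cylinders (j : int) (a : 'I_k.+1) :
  centered_cylinders.-sigma.-measurable [set eta | eta j = a].
Proof.
pose L := absz j; pose jL := absz (j + L%:Z).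
have jLE : - L%:Z + jL%:Z = j by rewrite /jL /L; lia.
have jL_le : (jL <= L + L)%N by rewrite /jL /L; lia.
pose ext (u : {ffun 'I_(L + L).+1 -> 'I_k.+1}) (x : int) := u (inord (absz (x + L%:Z))).
have extE u t : (t <= L + L)%N -> ext u (- L%:Z + t%:Z) = u (inord t).
  by move=> _; rewrite /ext (_ : absz (- L%:Z + t%:Z + L%:Z) = t) //; lia.
rewrite (_ : [set eta | eta j = a] =
    \bigcup_(u in [set u : {ffun 'I_(L + L).+1 -> 'I_k.+1} | u (inord jL) = a])
      cylinder (ext u) (- L%:Z) (L + L)).
  apply: fin_bigcup_measurable => [|u _]; first exact: finite_finset.
  by apply: sub_sigma_algebra; right; right; exists (ext u), L.
apply/seteqP; split => [eta eta_j|eta [u /= u_a eta_u]].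
  exists [ffun s : 'I_(L + L).+1 => eta (- L%:Z + s%:Z)].
    by rewrite /= ffunE inordK ?ltnS // jLE.
  by move=> t ht; rewrite extE // ffunE inordK.
by rewrite /= -jLE eta_u // extE.
Qed.

Lemma measurable_centered_cylinders :
  @measurable _ (Shift 'I_k.+1) = <<s centered_cylinders >>.
Proof.
apply/seteqP; split.
  apply: smallest_sub; first exact: smallest_sigma_algebra.
  by move=> _ [j [a ->]]; exact: coord_centered_cylinders.
apply: smallest_sub; first exact: sigma_algebra_measurable.
move=> A [->|[->|[w [L ->]]]];
  [exact: measurable0 | exact: measurableT | exact: measurable_cylinder].
Qed.

End CenteredCylinders.

Theorem lemma3p13 (R : realType) (n : nat) (orient : 'I_n.+1 -> bool)
    (lam0 : probability (Shift 'I_n.+1) R) :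
  markov_full lam0 ->
  exists lam : probability (Shift 'I_(n.+1 + n.+1)) R,
    [/\ sym_markov_A orient lam, push_eq lam lam0 &
        forall lam' : probability (Shift 'I_(n.+1 + n.+1)) R,
          sym_markov_A orient lam' -> push_eq lam' lam0 ->
          forall B : set (Shift 'I_(n.+1 + n.+1)), measurable B -> lam' B = lam B].
Proof.
move=> [q [Q lam0_markov]].
have ext_sym := symmetric_extension_markov orient lam0_markov.
have ext_push := symmetric_extension_push orient lam0.
exists (symmetric_extension orient lam0); split => // lam' lam'_sym lam'_push B mB.
apply: (measure_unique _ (fun=> setT) (measurable_centered_cylinders _)
  (@setI_closed_centered_cylinders _)) => //.
- by move=> _; right; left.
- by rewrite bigcup_const.
- move=> _ [->|[->|[w [L ->]]]]; first by rewrite !measure0.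
    by transitivity (1%:E : \bar R); [|apply/esym]; exact: probability_setT.
  exact: sym_markov_cylinder_unique lam'_sym lam'_push ext_sym ext_push.
- by move=> _; rewrite -ge0_fin_numE ?measure_ge0 // fin_num_measure.
Qed.
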